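(* No multiple zeta-star value $\zeta^{\star}(k_1,\ldots,k_r)$ (with $r\geq1$, $k_1\geq2$, $k_2,\ldots,k_r\geq1$ integers) is an integer.
   Context: $\zeta^{\star}(k_1,\ldots,k_r)=\sum_{n_1\geq n_2\geq\cdots\geq n_r\geq 1}\frac{1}{n_1^{k_1}\cdots n_r^{k_r}}$. *)

From Stdlib Require Import Reals List.
From Coquelicot Require Import Coquelicot.
Open Scope R_scope.

(* zs_tail ks n = sum over n >= n_2 >= ... >= n_r >= 1 of
   1 / (n_2^{k_2} ... n_r^{k_r}), where ks = [k_2; ...; k_r].
   For ks = [] this is the empty product 1. *)
Fixpoint zs_tail (ks : list nat) (n : nat) : R :=
  match ks with
  | nil => 1
  | k :: ks' =>
      match n with
      | O => 0
      | S m => sum_f_R0 (fun j => / (INR (S j)) ^ k * zs_tail ks' (S j)) m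
      end
  end.

(* The term of index n (n >= 0 corresponds to n_1 = n+1) of the series
   defining zeta^star(k1, ks). *)
Definition zeta_star_term (k1 : nat) (ks : list nat) (n : nat) : R :=
  / (INR (S n)) ^ k1 * zs_tail ks (S n).

Definition zeta_star (k1 : nat) (ks : list nat) : R :=
  Series (zeta_star_term k1 ks).

From Stdlib Require Import Reals List ZArith Lra Lia.
From Coquelicot Require Import Coquelicot.
Open Scope R_scope.

(* Write Z_w(n) for ζ*(w) truncated to n ≥ n_1, so that Z_{(k)·w} = A_k Z_w with
   A_k g(n) = Σ_{m ≤ n} g(m)/m^k ([hsum k]).  Suppose ζ*(w) is an integer j + 2 ≥ 2 and let
   B = A_2 A_1^j ([block j]).  Summation by parts gives, for every g,
     B g(n) + (B g(n) + Σ_{i=1}^j A_1^i g(n))/n = (j+2) g(1) + Σ_{k=2}^n (g(k) - B g(k))/(k(k-1)).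
   Hence the iterates B^q 1, which increase with q, stay below j + 2 by a fixed margin, while for
   G = Z_{(1)·u} one has B G ≤ G, and the decreasing iterates B^q G, of growth O(√n), satisfy
   B^{q+1} G(n) > j + 2 for large n.  Comparing w lexicographically with (2,1^j)(2,1^j)... shows
   that Z_w is either dominated by some B^p 1 or equal to some B^q G, with q ≥ 1 because k_1 ≥ 2;
   either way ζ*(w) ≠ j + 2. *)

Local Notation pos_word w := (List.Forall (fun k => (1 <= k)%nat) w).

(* Values at 0 are never read, hence the [1 <= k] guards throughout. *)
Fixpoint hsum (e : nat) (g : nat -> R) (n : nat) : R :=
  match n with O => 0 | S m => hsum e g m + g (S m) / INR (S m) ^ e end.

Definition one : nat -> R := fun _ => 1.

Definition zeta_trunc (w : list nat) : nat -> R := fold_right hsum one w.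

Lemma pow_INR_S_pos e m : 0 < INR (S m) ^ e.
Proof. apply pow_lt, lt_0_INR; lia. Qed.

Lemma hsum_S e g m : hsum e g (S m) = hsum e g m + g (S m) / INR (S m) ^ e.
Proof. reflexivity. Qed.

Lemma hsum_1 e g : hsum e g 1 = g 1%nat.
Proof. rewrite hsum_S. change (INR 1) with 1. rewrite pow1. simpl. field. Qed.

Lemma hsum_2 e g : hsum e g 2 = g 1%nat + g 2%nat / 2 ^ e.
Proof. rewrite hsum_S, hsum_1. reflexivity. Qed.

Lemma hsum_ext e g h n :
  (forall k, (1 <= k)%nat -> g k = h k) -> hsum e g n = hsum e h n.
Proof. intros H. induction n; [reflexivity|]. rewrite !hsum_S, IHn, H by lia. reflexivity. Qed.

Lemma hsum_le e g h n :
  (forall k, (1 <= k)%nat -> g k <= h k) -> hsum e g n <= hsum e h n.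
Proof.
  intros H. induction n; [simpl; lra|]. rewrite !hsum_S.
  apply Rplus_le_compat; [exact IHn|]. apply Rmult_le_compat_r.
  - left. apply Rinv_0_lt_compat, pow_INR_S_pos.
  - apply H; lia.
Qed.

Lemma hsum_nonneg e g n : (forall k, (1 <= k)%nat -> 0 <= g k) -> 0 <= hsum e g n.
Proof.
  intros H. replace 0 with (hsum e (fun _ => 0) n) by (induction n; simpl; [|rewrite IHn]; lra).
  apply hsum_le. exact H.
Qed.

Lemma hsum_le_n e g n m :
  (forall k, (1 <= k)%nat -> 0 <= g k) -> (n <= m)%nat -> hsum e g n <= hsum e g m.
Proof.
  intros H Hnm. induction Hnm as [|m Hnm IH]; [lra|]. rewrite hsum_S.
  enough (0 <= g (S m) / INR (S m) ^ e) by lra.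
  apply Rmult_le_pos; [apply H; lia | left; apply Rinv_0_lt_compat, pow_INR_S_pos].
Qed.

Lemma hsum_ge1 e g n :
  (forall k, (1 <= k)%nat -> 1 <= g k) -> (1 <= n)%nat -> 1 <= hsum e g n.
Proof.
  intros H Hn. apply Rle_trans with (hsum e g 1); [rewrite hsum_1; auto|].
  apply hsum_le_n; [intros k Hk; specialize (H k Hk); lra | exact Hn].
Qed.

Lemma hsum_le_exp e e' g n :
  (forall k, (1 <= k)%nat -> 0 <= g k) -> (e <= e')%nat -> hsum e' g n <= hsum e g n.
Proof.
  intros H He. induction n; [simpl; lra|]. rewrite !hsum_S.
  apply Rplus_le_compat; [exact IHn|]. apply Rmult_le_compat_l; [apply H; lia|].
  apply Rinv_le_contravar; [apply pow_INR_S_pos|].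
  apply Rle_pow; [|exact He]. rewrite S_INR. pose proof (pos_INR n). lra.
Qed.

Lemma hsum_lt_at2 e g h :
  (forall k, (1 <= k)%nat -> g k <= h k) -> g 2%nat < h 2%nat -> hsum e g 2 < hsum e h 2.
Proof.
  intros H H2. rewrite !hsum_2. assert (g 1%nat <= h 1%nat) by (apply H; lia).
  enough (g 2%nat / 2 ^ e < h 2%nat / 2 ^ e) by lra.
  apply Rmult_lt_compat_r; [apply Rinv_0_lt_compat, pow_lt; lra | exact H2].
Qed.

Lemma hsum_S_INR e n : hsum (S e) INR n = hsum e one n.
Proof.
  induction n; [reflexivity|]. rewrite !hsum_S, IHn. unfold one.
  pose proof (pow_INR_S_pos e n). pose proof (pow_INR_S_pos 1 n).
  rewrite <- tech_pow_Rmult. rewrite pow_1 in *. field. lra.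
Qed.

Lemma hsum_0_one n : hsum 0 one n = INR n.
Proof. induction n; [reflexivity|]. rewrite hsum_S, IHn, S_INR. unfold one. rewrite pow_O. field. Qed.

Lemma zeta_trunc_cons e w : zeta_trunc (e :: w) = hsum e (zeta_trunc w).
Proof. reflexivity. Qed.

Lemma zeta_trunc_1 w : zeta_trunc w 1 = 1.
Proof. induction w; [reflexivity|]. rewrite zeta_trunc_cons, hsum_1. exact IHw. Qed.

Lemma zeta_trunc_ge1 w n : (1 <= n)%nat -> 1 <= zeta_trunc w n.
Proof.
  revert n. induction w as [|e w IH]; intros n Hn.
  - unfold zeta_trunc, one. simpl. lra.
  - rewrite zeta_trunc_cons. apply hsum_ge1; auto.
Qed.

Lemma zeta_trunc_nonneg w n : (1 <= n)%nat -> 0 <= zeta_trunc w n.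
Proof. intros Hn. pose proof (zeta_trunc_ge1 w n Hn). lra. Qed.

Lemma zeta_trunc_le_INR w n : pos_word w -> (1 <= n)%nat -> zeta_trunc w n <= INR n.
Proof.
  intros Hw. revert n. induction Hw as [|e w He Hw IH]; intros n Hn.
  - apply (le_INR 1) in Hn. unfold zeta_trunc, one. simpl in *. lra.
  - rewrite zeta_trunc_cons, <- hsum_0_one, <- hsum_S_INR.
    eapply Rle_trans; [apply hsum_le_exp; [apply zeta_trunc_nonneg | exact He]|].
    apply hsum_le. exact IH.
Qed.

Lemma hsum_zeta_trunc_le e e' w n :
  (S e <= e')%nat -> pos_word w -> hsum e' (zeta_trunc w) n <= hsum e one n.
Proof.
  intros He Hw. rewrite <- hsum_S_INR.
  eapply Rle_trans; [apply hsum_le_exp; [apply zeta_trunc_nonneg | exact He]|].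
  apply hsum_le. intros k Hk. apply zeta_trunc_le_INR; assumption.
Qed.

Lemma zeta_trunc_2 e w : zeta_trunc (e :: w) 2 = 1 + zeta_trunc w 2 / 2 ^ e.
Proof. rewrite zeta_trunc_cons, hsum_2, zeta_trunc_1. reflexivity. Qed.

Lemma zeta_trunc_2_lt_2 w : pos_word w -> zeta_trunc w 2 < 2.
Proof.
  intros Hw. induction Hw as [|e w He Hw IH].
  - unfold zeta_trunc, one. simpl. lra.
  - rewrite zeta_trunc_2.
    assert (H2e : 2 <= 2 ^ e) by (rewrite <- pow_1 at 1; apply Rle_pow; lra || lia).
    enough (zeta_trunc w 2 / 2 ^ e < 1) by lra.
    apply Rlt_div_l; lra.
Qed.

Lemma zeta_trunc_2_bounds k w :
  (2 <= k)%nat -> pos_word w -> 1 < zeta_trunc (k :: w) 2 < 3 / 2.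
Proof.
  intros Hk Hw. rewrite zeta_trunc_2.
  pose proof (zeta_trunc_2_lt_2 w Hw). pose proof (zeta_trunc_ge1 w 2 ltac:(lia)).
  assert (H4 : 4 <= 2 ^ k) by (replace 4 with (2 ^ 2) by ring; apply Rle_pow; lra || lia).
  split.
  - enough (0 < zeta_trunc w 2 / 2 ^ k) by lra. apply Rdiv_lt_0_compat; lra.
  - enough (zeta_trunc w 2 / 2 ^ k < 1 / 2) by lra. apply Rlt_div_l; lra.
Qed.

Lemma zeta_trunc_1_cons_2 w : 3 / 2 <= zeta_trunc (1%nat :: w) 2.
Proof. rewrite zeta_trunc_2. pose proof (zeta_trunc_ge1 w 2 ltac:(lia)). simpl. lra. Qed.

Definition hsum1_pow (i : nat) : (nat -> R) -> nat -> R := Nat.iter i (hsum 1).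

Lemma hsum1_pow_S i g : hsum1_pow (S i) g = hsum 1 (hsum1_pow i g).
Proof. reflexivity. Qed.

Lemma hsum1_pow_1 i g : hsum1_pow i g 1 = g 1%nat.
Proof. induction i; [reflexivity|]. rewrite hsum1_pow_S, hsum_1. exact IHi. Qed.

Lemma hsum1_pow_le i g h :
  (forall k, (1 <= k)%nat -> g k <= h k) ->
  forall n, (1 <= n)%nat -> hsum1_pow i g n <= hsum1_pow i h n.
Proof.
  intros H. induction i; intros n Hn; [exact (H n Hn)|].
  rewrite !hsum1_pow_S. apply hsum_le. exact IHi.
Qed.

Lemma hsum1_pow_nonneg i g n :
  (forall k, (1 <= k)%nat -> 0 <= g k) -> (1 <= n)%nat -> 0 <= hsum1_pow i g n.
Proof.
  intros H. revert n. induction i; intros n Hn; [exact (H n Hn)|].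
  rewrite hsum1_pow_S. apply hsum_nonneg. exact IHi.
Qed.

Lemma hsum1_pow_ge1 i g n :
  (forall k, (1 <= k)%nat -> 1 <= g k) -> (1 <= n)%nat -> 1 <= hsum1_pow i g n.
Proof.
  intros H. revert n. induction i; intros n Hn; [exact (H n Hn)|].
  rewrite hsum1_pow_S. apply hsum_ge1; assumption.
Qed.

Lemma hsum1_pow_le_INR i g n :
  (forall k, (1 <= k)%nat -> g k <= INR k) -> (1 <= n)%nat -> hsum1_pow i g n <= INR n.
Proof.
  intros H. revert n. induction i; intros n Hn; [exact (H n Hn)|].
  rewrite hsum1_pow_S, <- hsum_0_one, <- hsum_S_INR. apply hsum_le. exact IHi.
Qed.

Lemma hsum1_pow_lt_at2 i g h :
  (forall k, (1 <= k)%nat -> g k <= h k) -> g 2%nat < h 2%nat ->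
  hsum1_pow i g 2 < hsum1_pow i h 2.
Proof.
  intros H H2. induction i; [exact H2|]. rewrite !hsum1_pow_S.
  apply hsum_lt_at2; [apply hsum1_pow_le; exact H | exact IHi].
Qed.

Lemma hsum1_pow_2_lt_2 i g : g 1%nat = 1 -> g 2%nat < 2 -> hsum1_pow i g 2 < 2.
Proof.
  intros H1 H2. induction i; [exact H2|].
  rewrite hsum1_pow_S, hsum_2, hsum1_pow_1, H1. lra.
Qed.

Lemma zeta_trunc_le_hsum1_pow w n :
  pos_word w -> (1 <= n)%nat -> zeta_trunc w n <= hsum1_pow (length w) one n.
Proof.
  intros Hw. revert n. induction Hw as [|e w He Hw IH]; intros n Hn; [apply Rle_refl|].
  rewrite zeta_trunc_cons. cbn [length]. rewrite hsum1_pow_S.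
  eapply Rle_trans; [apply (hsum_le_exp 1 e); [apply zeta_trunc_nonneg | exact He]|].
  apply hsum_le. exact IH.
Qed.

Lemma sqrt_S_div_le n :
  sqrt (INR (S n)) / INR (S n) <= 2 * (sqrt (INR (S n)) - sqrt (INR n)).
Proof.
  assert (Hb : 0 < sqrt (INR (S n))) by (apply sqrt_lt_R0, lt_0_INR; lia).
  pose proof (sqrt_pos (INR n)) as Ha.
  pose proof (sqrt_sqrt (INR n) (pos_INR n)) as Ea.
  pose proof (sqrt_sqrt (INR (S n)) (pos_INR (S n))) as Eb.
  set (a := sqrt (INR n)) in *. set (b := sqrt (INR (S n))) in *.
  rewrite <- Eb. replace (b / (b * b)) with (/ b) by (field; lra).
  apply (Rmult_le_reg_r b); [exact Hb|]. rewrite Rinv_l by lra.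
  rewrite S_INR in Eb. nra.
Qed.

Lemma hsum1_le_sqrt C g n :
  0 <= C -> (forall k, (1 <= k)%nat -> g k <= C * sqrt (INR k)) ->
  hsum 1 g n <= 2 * C * sqrt (INR n).
Proof.
  intros HC Hg. induction n as [|n IH].
  - simpl. rewrite sqrt_0. lra.
  - rewrite hsum_S, pow_1. pose proof (sqrt_S_div_le n).
    assert (g (S n) / INR (S n) <= C * (sqrt (INR (S n)) / INR (S n))).
    { unfold Rdiv. rewrite <- Rmult_assoc. apply Rmult_le_compat_r.
      - left. apply Rinv_0_lt_compat, lt_0_INR. lia.
      - apply Hg. lia. }
    nra.
Qed.

Lemma hsum1_pow_le_sqrt C g i n :
  0 <= C -> (forall k, (1 <= k)%nat -> g k <= C * sqrt (INR k)) ->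
  (1 <= n)%nat -> hsum1_pow i g n <= 2 ^ i * C * sqrt (INR n).
Proof.
  intros HC Hg. revert n. induction i; intros n Hn.
  - rewrite pow_O, Rmult_1_l. exact (Hg n Hn).
  - rewrite hsum1_pow_S. replace (2 ^ S i * C) with (2 * (2 ^ i * C)) by (simpl; ring).
    apply hsum1_le_sqrt; [apply Rmult_le_pos; [apply pow_le; lra | exact HC] | exact IHi].
Qed.

Lemma zeta_trunc_le_sqrt w n :
  pos_word w -> (1 <= n)%nat -> zeta_trunc w n <= 2 ^ length w * sqrt (INR n).
Proof.
  intros Hw. revert n. induction Hw as [|e w He Hw IH]; intros n Hn.
  - cbn [length]. rewrite pow_O, Rmult_1_l. change (1 <= sqrt (INR n)). rewrite <- sqrt_1.
    apply sqrt_le_1_alt.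
    apply (le_INR 1) in Hn. exact Hn.
  - rewrite zeta_trunc_cons.
    eapply Rle_trans; [apply hsum_le_exp; [apply zeta_trunc_nonneg | exact He]|].
    replace (2 ^ length (e :: w)) with (2 * 2 ^ length w) by (simpl; ring).
    apply hsum1_le_sqrt; [apply pow_le; lra | exact IH].
Qed.

Fixpoint hsum1_pows (j : nat) (g : nat -> R) (n : nat) : R :=
  match j with O => 0 | S i => hsum1_pows i g n + hsum1_pow (S i) g n end.

Lemma hsum1_pows_1 j g : hsum1_pows j g 1 = INR j * g 1%nat.
Proof. induction j; [simpl; ring|]. cbn [hsum1_pows]. rewrite IHj, hsum1_pow_1, S_INR. ring. Qed.

Lemma hsum1_pows_step j g n :
  hsum1_pows j g (S n) - hsum1_pows j g n =
  (hsum1_pows j g (S n) - hsum1_pow j g (S n) + g (S n)) / INR (S n).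
Proof.
  assert (Hn : 0 < INR (S n)) by (apply lt_0_INR; lia).
  induction j as [|j IH]; cbn [hsum1_pows].
  - change (hsum1_pow 0 g (S n)) with (g (S n)). field. lra.
  - rewrite hsum1_pow_S, (hsum_S 1 _ n), pow_1.
    replace (hsum1_pows j g (S n) + (hsum 1 (hsum1_pow j g) n + hsum1_pow j g (S n) / INR (S n)) -
             (hsum1_pows j g n + hsum 1 (hsum1_pow j g) n))
      with ((hsum1_pows j g (S n) - hsum1_pows j g n) + hsum1_pow j g (S n) / INR (S n)) by ring.
    rewrite IH. field. lra.
Qed.

Lemma hsum1_pows_nonneg j g n :
  (forall k, (1 <= k)%nat -> 0 <= g k) -> (1 <= n)%nat -> 0 <= hsum1_pows j g n.
Proof.
  intros H Hn. induction j; cbn [hsum1_pows]; [lra|].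
  pose proof (hsum1_pow_nonneg (S j) g n H Hn). lra.
Qed.

Lemma hsum1_pows_le_sqrt C g j n :
  0 <= C -> (forall k, (1 <= k)%nat -> g k <= C * sqrt (INR k)) -> (1 <= n)%nat ->
  hsum1_pows j g n <= INR j * 2 ^ j * C * sqrt (INR n).
Proof.
  intros HC Hg Hn. induction j; cbn [hsum1_pows]; [simpl; lra|].
  pose proof (hsum1_pow_le_sqrt C g (S j) n HC Hg Hn) as Hpow.
  assert (HX : 0 <= 2 ^ j * C * sqrt (INR n)).
  { apply Rmult_le_pos; [apply Rmult_le_pos; [apply pow_le; lra | exact HC] | apply sqrt_pos]. }
  pose proof (pos_INR j).
  rewrite S_INR. simpl pow in *. nra.
Qed.

Fixpoint defect_sum (d : nat -> R) (n : nat) : R :=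
  match n with
  | S (S m as k) => defect_sum d k + d (S k) / (INR (S k) * INR k)
  | _ => 0
  end.

Lemma defect_sum_SS d m :
  defect_sum d (S (S m)) = defect_sum d (S m) + d (S (S m)) / (INR (S (S m)) * INR (S m)).
Proof. reflexivity. Qed.

Lemma defect_sum_2 d : defect_sum d 2 = d 2%nat / 2.
Proof. rewrite defect_sum_SS. simpl. field. Qed.

Lemma defect_sum_le_2 d n :
  (forall k, (3 <= k)%nat -> d k <= 0) -> (2 <= n)%nat -> defect_sum d n <= defect_sum d 2.
Proof.
  intros H Hn. induction Hn as [|[|m] Hn IH]; [lra | lia|]. rewrite (defect_sum_SS d m).
  enough (d (S (S m)) / (INR (S (S m)) * INR (S m)) <= 0) by lra.
  apply Rmult_le_0_r; [apply H; lia|].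
  left. apply Rinv_0_lt_compat, Rmult_lt_0_compat; apply lt_0_INR; lia.
Qed.

Lemma defect_sum_ge_2 d n :
  (forall k, (3 <= k)%nat -> 0 <= d k) -> (2 <= n)%nat -> defect_sum d 2 <= defect_sum d n.
Proof.
  intros H Hn. induction Hn as [|[|m] Hn IH]; [lra | lia|]. rewrite (defect_sum_SS d m).
  enough (0 <= d (S (S m)) / (INR (S (S m)) * INR (S m))) by lra.
  apply Rmult_le_pos; [apply H; lia|].
  left. apply Rinv_0_lt_compat, Rmult_lt_0_compat; apply lt_0_INR; lia.
Qed.

Lemma exists_mul_sqrt_lt K eps :
  0 < eps -> exists n, (2 <= n)%nat /\ K * sqrt (INR n) < eps * INR n.
Proof.
  intros Heps. set (a := Rmax 0 (K / eps)).
  assert (Ha : 0 <= a) by apply Rmax_l.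
  assert (HKa : K <= eps * a).
  { replace K with (eps * (K / eps)) at 1 by (field; lra).
    apply Rmult_le_compat_l; [lra | apply Rmax_r]. }
  destruct (INR_archimed 1 (a * a)) as [N HN]; [lra|]. rewrite Rmult_1_r in HN.
  exists (N + 2)%nat. split; [lia|].
  assert (HNn : INR N < INR (N + 2)) by (apply lt_INR; lia).
  pose proof (sqrt_sqrt (INR (N + 2)) (pos_INR _)) as Esq.
  assert (Hsq : a < sqrt (INR (N + 2))).
  { rewrite <- (sqrt_square a Ha). apply sqrt_lt_1_alt. split; [apply Rmult_le_pos |]; lra. }
  set (s := sqrt (INR (N + 2))) in *. rewrite <- Esq, <- Rmult_assoc.
  apply Rle_lt_trans with (eps * a * s); [apply Rmult_le_compat_r; lra|].
  apply Rmult_lt_compat_r; [lra|]. apply Rmult_lt_compat_l; lra.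
Qed.

Section Blocks.

Variable j : nat.

Definition block (g : nat -> R) : nat -> R := hsum 2 (hsum1_pow j g).

Definition blocks (q : nat) : (nat -> R) -> nat -> R := Nat.iter q block.

Lemma block_1 g : block g 1 = g 1%nat.
Proof. unfold block. rewrite hsum_1, hsum1_pow_1. reflexivity. Qed.

Lemma block_le g h n :
  (forall k, (1 <= k)%nat -> g k <= h k) -> block g n <= block h n.
Proof. intros H. apply hsum_le. intros k Hk. apply hsum1_pow_le; assumption. Qed.

Lemma block_nonneg g n : (forall k, (1 <= k)%nat -> 0 <= g k) -> 0 <= block g n.
Proof. intros H. apply hsum_nonneg. intros k Hk. apply hsum1_pow_nonneg; assumption. Qed.

Lemma block_lt_at2 g h :
  (forall k, (1 <= k)%nat -> g k <= h k) -> g 2%nat < h 2%nat -> block g 2 < block h 2.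
Proof.
  intros H H2. apply hsum_lt_at2; [intros k Hk; apply hsum1_pow_le; assumption|].
  apply hsum1_pow_lt_at2; assumption.
Qed.

Lemma block_identity g n : (1 <= n)%nat ->
  block g n + (block g n + hsum1_pows j g n) / INR n =
  INR (j + 2) * g 1%nat + defect_sum (fun k => g k - block g k) n.
Proof.
  intros Hn. induction Hn as [|n Hn IH].
  - rewrite block_1, hsum1_pows_1, plus_INR. simpl. field.
  - destruct n as [|m]; [lia|]. rewrite defect_sum_SS, <- Rplus_assoc, <- IH.
    set (N := S m) in *.
    assert (HN : 0 < INR N) by (apply lt_0_INR; unfold N; lia).
    assert (Hpows : hsum1_pows j g N = hsum1_pows j g (S N) -
              (hsum1_pows j g (S N) - hsum1_pow j g (S N) + g (S N)) / INR (S N)).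
    { rewrite <- hsum1_pows_step. ring. }
    assert (Hblock : block g (S N) = block g N + hsum1_pow j g (S N) / INR (S N) ^ 2).
    { reflexivity. }
    rewrite Hpows, Hblock, S_INR. field. lra.
Qed.

Lemma blocks_S_r q g : blocks (S q) g = blocks q (block g).
Proof. apply Nat.iter_succ_r. Qed.

Lemma blocks_1 q g : blocks q g 1 = g 1%nat.
Proof. induction q; [reflexivity|]. exact (eq_trans (block_1 _) IHq). Qed.

Lemma blocks_le q g h :
  (forall k, (1 <= k)%nat -> g k <= h k) ->
  forall n, (1 <= n)%nat -> blocks q g n <= blocks q h n.
Proof.
  intros H. induction q; intros n Hn; [exact (H n Hn)|].
  apply block_le. exact IHq.
Qed.

Lemma blocks_nonneg q g n :
  (forall k, (1 <= k)%nat -> 0 <= g k) -> (1 <= n)%nat -> 0 <= blocks q g n.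
Proof.
  intros H. revert n. induction q; intros n Hn; [exact (H n Hn)|].
  apply block_nonneg. exact IHq.
Qed.

Lemma blocks_lt_at2 q g h :
  (forall k, (1 <= k)%nat -> g k <= h k) -> g 2%nat < h 2%nat ->
  blocks q g 2 < blocks q h 2.
Proof.
  intros H H2. induction q; [exact H2|].
  apply block_lt_at2; [apply blocks_le; exact H | exact IHq].
Qed.

Lemma blocks_le_blocks_S q g :
  (forall k, (1 <= k)%nat -> g k <= block g k) ->
  forall n, (1 <= n)%nat -> blocks q g n <= blocks (S q) g n.
Proof. intros H. rewrite blocks_S_r. apply blocks_le. exact H. Qed.

Lemma blocks_S_le_blocks q g :
  (forall k, (1 <= k)%nat -> block g k <= g k) ->
  forall n, (1 <= n)%nat -> blocks (S q) g n <= blocks q g n.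
Proof. intros H. rewrite blocks_S_r. apply blocks_le. exact H. Qed.

Lemma blocks_le_self q g :
  (forall k, (1 <= k)%nat -> block g k <= g k) ->
  forall n, (1 <= n)%nat -> blocks q g n <= g n.
Proof.
  intros H. induction q; intros n Hn; [apply Rle_refl|].
  eapply Rle_trans; [apply blocks_S_le_blocks | apply IHq]; assumption.
Qed.

Lemma block_le_of_le_block g n :
  (forall k, (1 <= k)%nat -> 0 <= g k) -> g 1%nat = 1 ->
  (forall k, (1 <= k)%nat -> g k <= block g k) -> (2 <= n)%nat ->
  block g n <= INR (j + 2) - (block g 2 - g 2%nat) / 2.
Proof.
  intros Hg0 Hg1 Hsub Hn.
  pose proof (block_identity g n ltac:(lia)) as Hid. rewrite Hg1, Rmult_1_r in Hid.
  assert (HD : defect_sum (fun k => g k - block g k) n <= (g 2%nat - block g 2) / 2).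
  { rewrite <- (defect_sum_2 (fun k => g k - block g k)).
    apply defect_sum_le_2; [intros k Hk; specialize (Hsub k ltac:(lia)); lra | exact Hn]. }
  assert (Hcorr : 0 <= (block g n + hsum1_pows j g n) / INR n).
  { apply Rle_mult_inv_pos; [|apply lt_0_INR; lia].
    pose proof (block_nonneg g n Hg0). pose proof (hsum1_pows_nonneg j g n Hg0 ltac:(lia)). lra. }
  lra.
Qed.

Lemma block_add_hsum1_pows_le_sqrt C g n :
  0 <= C -> (forall k, (1 <= k)%nat -> 0 <= g k <= C * sqrt (INR k)) -> (1 <= n)%nat ->
  block g n + hsum1_pows j g n <= (2 ^ S j + INR j * 2 ^ j) * C * sqrt (INR n).
Proof.
  intros HC Hg Hn.
  assert (Hblock : block g n <= 2 ^ S j * C * sqrt (INR n)).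
  { eapply Rle_trans; [apply (hsum_le_exp 1 2); [|lia]|].
    - intros k Hk. apply hsum1_pow_nonneg; [intros i Hi; apply Hg |]; assumption.
    - apply (hsum1_pow_le_sqrt C g (S j)); [exact HC | intros k Hk; apply Hg | ]; assumption. }
  pose proof (hsum1_pows_le_sqrt C g j n HC (fun k Hk => proj2 (Hg k Hk)) Hn).
  lra.
Qed.

Lemma block_eventually_gt g C :
  (forall k, (1 <= k)%nat -> 0 <= g k <= C * sqrt (INR k)) -> g 1%nat = 1 ->
  (forall k, (1 <= k)%nat -> block g k <= g k) -> block g 2 < g 2%nat ->
  exists n, (1 <= n)%nat /\ INR (j + 2) < block g n.
Proof.
  intros Hg Hg1 Hsup H2.
  assert (HC : 0 <= C).
  { destruct (Hg 1%nat) as [_ H1]; [lia|]. rewrite Hg1 in H1.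
    change (INR 1) with 1 in H1. rewrite sqrt_1 in H1. lra. }
  set (K := (2 ^ S j + INR j * 2 ^ j) * C).
  set (d2 := g 2%nat - block g 2).
  destruct (exists_mul_sqrt_lt K (d2 / 2)) as [n [Hn HKn]]; [unfold d2; lra|].
  exists n. split; [lia|].
  pose proof (block_identity g n ltac:(lia)) as Hid. rewrite Hg1, Rmult_1_r in Hid.
  assert (HD : d2 / 2 <= defect_sum (fun k => g k - block g k) n).
  { unfold d2. rewrite <- (defect_sum_2 (fun k => g k - block g k)).
    apply defect_sum_ge_2; [intros k Hk; specialize (Hsup k ltac:(lia)); lra | exact Hn]. }
  assert (Hcorr : (block g n + hsum1_pows j g n) / INR n < d2 / 2).
  { apply Rlt_div_l; [apply lt_0_INR; lia|].
    pose proof (block_add_hsum1_pows_le_sqrt C g n HC Hg ltac:(lia)). fold K in H. lra. }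
  lra.
Qed.

Lemma one_le_block_one k : (1 <= k)%nat -> one k <= block one k.
Proof.
  intros Hk. apply hsum_ge1; [|exact Hk].
  intros i Hi. apply hsum1_pow_ge1; [intros; apply Rle_refl | exact Hi].
Qed.

Lemma one_lt_block_one_at2 : one 2%nat < block one 2.
Proof.
  unfold block. rewrite hsum_2, hsum1_pow_1.
  pose proof (hsum1_pow_ge1 j one 2 (fun _ _ => Rle_refl 1) ltac:(lia)).
  unfold one in *. simpl pow. lra.
Qed.

Lemma blocks_one_le q :
  exists eps, 0 < eps /\ forall n, (1 <= n)%nat -> blocks q one n <= INR (j + 2) - eps.
Proof.
  set (g := blocks q one).
  assert (Hg1 : forall k, (1 <= k)%nat -> 1 <= g k).
  { intros k Hk. induction q as [|q IH]; [apply Rle_refl|].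
    eapply Rle_trans; [exact IH | apply blocks_le_blocks_S; [exact one_le_block_one | exact Hk]]. }
  assert (Hsub : forall k, (1 <= k)%nat -> g k <= block g k).
  { exact (blocks_le_blocks_S q one one_le_block_one). }
  assert (Hgap : g 2%nat < block g 2).
  { unfold g. change (block (blocks q one)) with (blocks (S q) one).
    rewrite blocks_S_r. apply blocks_lt_at2; [exact one_le_block_one | exact one_lt_block_one_at2]. }
  exists ((block g 2 - g 2%nat) / 2). split; [lra|].
  intros n Hn.
  assert (Hg0 : forall k, (1 <= k)%nat -> 0 <= g k) by (intros k Hk; specialize (Hg1 k Hk); lra).
  eapply Rle_trans; [apply Hsub; exact Hn|].
  eapply Rle_trans; [apply (hsum_le_n 2 _ n (Nat.max n 2)); [|lia]|].
  - intros k Hk. apply hsum1_pow_nonneg; assumption.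
  - apply block_le_of_le_block; [exact Hg0 | apply blocks_1 | exact Hsub | lia].
Qed.

Lemma block_zeta_trunc_le rest k : pos_word rest -> (1 <= k)%nat ->
  block (zeta_trunc (1%nat :: rest)) k <= zeta_trunc (1%nat :: rest) k.
Proof.
  intros Hrest Hk. assert (Hw : pos_word (1%nat :: rest)) by (constructor; [lia | exact Hrest]).
  unfold block. eapply Rle_trans; [apply (hsum_le 2 _ INR)|].
  - intros i Hi. apply hsum1_pow_le_INR; [|exact Hi].
    intros m Hm. apply zeta_trunc_le_INR; assumption.
  - rewrite hsum_S_INR, zeta_trunc_cons. apply hsum_le.
    intros i Hi. apply zeta_trunc_ge1. exact Hi.
Qed.

Lemma block_zeta_trunc_lt_at2 rest : pos_word rest ->
  block (zeta_trunc (1%nat :: rest)) 2 < zeta_trunc (1%nat :: rest) 2.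
Proof.
  intros Hrest. assert (Hw : pos_word (1%nat :: rest)) by (constructor; [lia | exact Hrest]).
  pose proof (zeta_trunc_1_cons_2 rest).
  pose proof (hsum1_pow_2_lt_2 j _ (zeta_trunc_1 _) (zeta_trunc_2_lt_2 _ Hw)).
  unfold block. rewrite hsum_2, hsum1_pow_1, zeta_trunc_1. simpl pow. lra.
Qed.

Lemma blocks_zeta_trunc_gt q rest : pos_word rest ->
  exists n, (1 <= n)%nat /\ INR (j + 2) < blocks (S q) (zeta_trunc (1%nat :: rest)) n.
Proof.
  intros Hrest. assert (Hw : pos_word (1%nat :: rest)) by (constructor; [lia | exact Hrest]).
  set (G := zeta_trunc (1%nat :: rest)).
  assert (HG0 : forall k, (1 <= k)%nat -> 0 <= G k) by (intros; apply zeta_trunc_nonneg; assumption).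
  assert (HGsup : forall k, (1 <= k)%nat -> block G k <= G k).
  { intros k Hk. apply block_zeta_trunc_le; assumption. }
  apply (block_eventually_gt (blocks q G) (2 ^ length (1%nat :: rest))).
  - intros k Hk. split; [apply blocks_nonneg; assumption|].
    eapply Rle_trans; [apply blocks_le_self; assumption|].
    apply zeta_trunc_le_sqrt; assumption.
  - rewrite blocks_1. apply zeta_trunc_1.
  - exact (blocks_S_le_blocks q G HGsup).
  - change (block (blocks q G)) with (blocks (S q) G). rewrite blocks_S_r.
    apply blocks_lt_at2; [exact HGsup | apply block_zeta_trunc_lt_at2; exact Hrest].
Qed.

(* [w] is read against (2,1^j)(2,1^j)..., with [i] ones still due before the next 2.  The end
   of [w] or a larger letter leads to the first case, a 1 where a 2 is due to the second. *)
Lemma zeta_trunc_lex_blocks w : pos_word w -> forall i,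
  (exists p, forall n, (1 <= n)%nat -> zeta_trunc w n <= hsum1_pow i (blocks p one) n) \/
  (exists q rest, pos_word rest /\ forall n, (1 <= n)%nat ->
     zeta_trunc w n = hsum1_pow i (blocks q (zeta_trunc (1%nat :: rest))) n).
Proof.
  intros Hw. induction Hw as [|e w He Hw IH]; intros i.
  - left. exists 0%nat. intros n Hn. apply hsum1_pow_ge1; [intros; apply Rle_refl | exact Hn].
  - assert (Hone : forall k, (1 <= k)%nat -> 1 <= one k) by (intros; apply Rle_refl).
    destruct i as [|i].
    + destruct e as [|[|[|e]]]; [lia | | |].
      * right. exists 0%nat, w. split; [exact Hw | reflexivity].
      * destruct (IH j) as [[p Hp] | [q [rest [Hr Hq]]]].
        -- left. exists (S p). intros n Hn.
           change (hsum 2 (zeta_trunc w) n <= hsum 2 (hsum1_pow j (blocks p one)) n).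
           apply hsum_le. exact Hp.
        -- right. exists (S q), rest. split; [exact Hr|]. intros n Hn.
           change (hsum 2 (zeta_trunc w) n =
                   hsum 2 (hsum1_pow j (blocks q (zeta_trunc (1%nat :: rest)))) n).
           apply hsum_ext. exact Hq.
      * left. exists 1%nat. intros n Hn.
        change (hsum (S (S (S e))) (zeta_trunc w) n <= hsum 2 (hsum1_pow j one) n).
        eapply Rle_trans; [apply (hsum_zeta_trunc_le 2); [lia | exact Hw]|].
        apply hsum_le. intros k Hk. apply hsum1_pow_ge1; assumption.
    + destruct e as [|[|e]]; [lia | |].
      * destruct (IH i) as [[p Hp] | [q [rest [Hr Hq]]]].
        -- left. exists p. intros n Hn.
           change (hsum 1 (zeta_trunc w) n <= hsum 1 (hsum1_pow i (blocks p one)) n).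
           apply hsum_le. exact Hp.
        -- right. exists q, rest. split; [exact Hr|]. intros n Hn.
           change (hsum 1 (zeta_trunc w) n =
                   hsum 1 (hsum1_pow i (blocks q (zeta_trunc (1%nat :: rest)))) n).
           apply hsum_ext. exact Hq.
      * left. exists 0%nat. intros n Hn.
        change (hsum (S (S e)) (zeta_trunc w) n <= hsum 1 (hsum1_pow i one) n).
        eapply Rle_trans; [apply (hsum_zeta_trunc_le 1); [lia | exact Hw]|].
        apply hsum_le. intros k Hk. apply hsum1_pow_ge1; assumption.
Qed.

End Blocks.

Lemma sum_f_R0_hsum k g m :
  sum_f_R0 (fun i => / INR (S i) ^ k * g (S i)) m = hsum k g (S m).
Proof.
  induction m as [|m IH].
  - rewrite hsum_1. simpl. rewrite pow1. field.
  - cbn [sum_f_R0]. rewrite IH, (hsum_S k g (S m)). unfold Rdiv. ring.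
Qed.

Lemma zs_tail_eq_zeta_trunc w n : zs_tail w n = zeta_trunc w n.
Proof.
  revert n. induction w as [|k w IH]; intros [|m]; try reflexivity.
  cbn [zs_tail]. rewrite sum_f_R0_hsum, zeta_trunc_cons. apply hsum_ext. auto.
Qed.

Lemma sum_n_zeta_star_term k1 ks N :
  sum_n (zeta_star_term k1 ks) N = zeta_trunc (k1 :: ks) (S N).
Proof. rewrite sum_n_Reals, <- zs_tail_eq_zeta_trunc. reflexivity. Qed.

Lemma zeta_star_term_is_series_sup k1 ks : (2 <= k1)%nat -> pos_word ks ->
  exists l, is_series (zeta_star_term k1 ks) l /\
    (forall n, (1 <= n)%nat -> zeta_trunc (k1 :: ks) n <= l) /\
    (forall M, (forall n, (1 <= n)%nat -> zeta_trunc (k1 :: ks) n <= M) -> l <= M).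
Proof.
  intros Hk1 Hks. set (u := fun N => zeta_trunc (k1 :: ks) (S N)).
  assert (Hincr : forall N, u N <= u (S N)).
  { intros N. unfold u. rewrite zeta_trunc_cons.
    apply hsum_le_n; [apply zeta_trunc_nonneg | lia]. }
  assert (Hbound : forall N, u N <= INR (length ks + 2)).
  { intros N. destruct (blocks_one_le (length ks) 1) as [eps [Heps Hb]].
    enough (u N <= blocks (length ks) 1 one (S N)) by (specialize (Hb (S N) ltac:(lia)); lra).
    unfold u. rewrite zeta_trunc_cons.
    change (hsum k1 (zeta_trunc ks) (S N) <= hsum 2 (hsum1_pow (length ks) one) (S N)).
    eapply Rle_trans; [apply hsum_le_exp; [apply zeta_trunc_nonneg | exact Hk1]|].
    apply hsum_le. intros k Hk. apply zeta_trunc_le_hsum1_pow; assumption. }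
  destruct (ex_finite_lim_seq_incr u _ Hincr Hbound) as [l Hl].
  exists l. split; [|split].
  - enough (Hsum : is_lim_seq (sum_n (zeta_star_term k1 ks)) l) by exact Hsum.
    apply (is_lim_seq_ext u); [|exact Hl]. intros N. symmetry. apply sum_n_zeta_star_term.
  - intros [|N] Hn; [lia|]. exact (is_lim_seq_incr_compare u l Hl Hincr N).
  - intros M HM. apply (is_lim_seq_le u (fun _ => M) l M); [| exact Hl | apply is_lim_seq_const].
    intros N. apply HM. lia.
Qed.

Theorem theorem1p8 (k1 : nat) (ks : list nat) :
  (2 <= k1)%nat -> List.Forall (fun k => (1 <= k)%nat) ks ->
  ex_series (zeta_star_term k1 ks) /\
  forall z : Z, zeta_star k1 ks <> IZR z.
Proof.
  intros Hk1 Hks.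
  destruct (zeta_star_term_is_series_sup k1 ks Hk1 Hks) as [l [Hl [Hub Hlub]]].
  split; [exists l; exact Hl|].
  intros z Hz. unfold zeta_star in Hz. rewrite (is_series_unique _ _ Hl) in Hz.
  assert (Hw : pos_word (k1 :: ks)) by (constructor; [lia | exact Hks]).
  destruct (zeta_trunc_2_bounds k1 ks Hk1 Hks) as [Hw2 Hw2'].
  assert (Hz2 : (2 <= z)%Z).
  { pose proof (Hub 2%nat ltac:(lia)). assert (1 < z)%Z by (apply lt_IZR; lra). lia. }
  set (j := (Z.to_nat z - 2)%nat).
  assert (Hj : INR (j + 2) = IZR z).
  { rewrite INR_IZR_INZ. f_equal. unfold j. lia. }
  destruct (zeta_trunc_lex_blocks j (k1 :: ks) Hw 0) as [[p Hp] | [[|q] [rest [Hrest Heq]]]].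
  - destruct (blocks_one_le j p) as [eps [Heps Hb]].
    enough (l <= INR (j + 2) - eps) by lra.
    apply Hlub. intros n Hn. eapply Rle_trans; [apply Hp | apply Hb]; exact Hn.
  - specialize (Heq 2%nat ltac:(lia)).
    change (zeta_trunc (k1 :: ks) 2 = zeta_trunc (1%nat :: rest) 2) in Heq.
    pose proof (zeta_trunc_1_cons_2 rest). lra.
  - destruct (blocks_zeta_trunc_gt j q rest Hrest) as [n [Hn Hgt]].
    specialize (Heq n Hn). specialize (Hub n Hn).
    change (zeta_trunc (k1 :: ks) n = blocks j (S q) (zeta_trunc (1%nat :: rest)) n) in Heq.
    lra.
Qed.
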